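(* Let $n \ge 1$ be such that $SP_n$ is tree-complete and $n+1$ is prime. Then $SP_{n+1}$ and $SP_{n+2}$ are tree-complete. Further, if $n+1$ and $n+3$ are both prime, then $SP_{n+1}, SP_{n+2}, SP_{n+3}, SP_{n+4}, SP_{n+5}$ are all tree-complete.
   Context: For $n \ge 1$, the super prime graph $SP_n$ is the graph with node set $\{1,2,\dots,n\}$ in which two distinct nodes $u, v$ are adjacent if and only if $\gcd(u,v) = 1$. A graph $G$ of order $n$ is tree-complete if every tree of order $n$ is isomorphic to a subgraph of $G$. *)

From mathcomp Require Import all_boot all_order.
Set Implicit Arguments. Unset Strict Implicit. Unset Printing Implicit Defensive.

Definition simple_graph n (e : rel 'I_n) : Prop :=
  irreflexive e /\ symmetric e.

Definition n_edges n (e : rel 'I_n) : nat :=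
  #|[set p : 'I_n * 'I_n | e p.1 p.2 && (val p.1 < val p.2)]|.

Definition is_tree n (e : rel 'I_n) : Prop :=
  simple_graph e /\ (forall x y : 'I_n, connect e x y) /\ n_edges e = n.-1.

Definition subgraph_embeds n (T G : rel 'I_n) : Prop :=
  exists f : 'I_n -> 'I_n, injective f /\ forall x y, T x y -> G (f x) (f y).

Definition tree_complete n (G : rel 'I_n) : Prop :=
  forall T : rel 'I_n, is_tree T -> subgraph_embeds T G.

(* Super prime graph SP_n: vertex i : 'I_n represents the integer i+1;
   distinct vertices adjacent iff coprime. *)
Definition SP n : rel 'I_n :=
  fun i j => (i != j) && coprime i.+1 j.+1.
Arguments SP n : clear implicits.

(* Let p = m + 1 be prime and SP_m tree-complete, and let T be a tree on m + k vertices.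
   Choose k vertices s = [a; ...] of T such that only the first one, a, has neighbours
   outside s.  The forest T - s lies in a tree on the remaining m vertices, hence embeds
   into SP_m: it gets distinct labels in 1..m, adjacent ones coprime.  Labelling s by
   p, p + 1, ..., p + k - 1 in order embeds T into SP_(m+k): edges leaving s start at a,
   and the prime p is coprime to 1..m; inside s it suffices that p, ..., p + k - 1 are
   pairwise coprime, which holds for k <= 3 when p is odd.  Such an s exists for k = 1
   (any vertex), k = 2 (a leaf, preceded by its neighbour) and k = 3 (a vertex followed
   by two leaves adjacent to it, or a path a - x - y with x of degree 2 and y a leaf;
   counting degrees shows that every tree with at least three vertices has one of the
   two).  Apply this with m = n and with m = n + 2. *)

From mathcomp Require Import all_boot all_order zify.
Set Implicit Arguments. Unset Strict Implicit. Unset Printing Implicit Defensive.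

Lemma connect_homo (T T' : finType) (e : rel T) (e' : rel T') (h : T -> T') :
  (forall x y, e x y -> connect e' (h x) (h y)) ->
  forall x y, connect e x y -> connect e' (h x) (h y).
Proof.
move=> he x _ /connectP[p ep ->]; elim: p x ep => //= y p IHp x /andP[/he exy /IHp].
exact: connect_trans.
Qed.

Lemma sum_nat_bool (T : finType) (A : {set T}) (P : pred T) :
  \sum_(x in A) (P x : nat) = #|[set x in A | P x]|.
Proof.
rewrite -sum1_card big_mkcond [RHS]big_mkcond /=.
by apply: eq_bigr => x _; rewrite inE; case: (x \in A); case: (P x).
Qed.

Section TreesOnSubsets.

Variable V : finType.
Implicit Types (r : rel V) (S : {set V}).

Definition induced r S : rel V := [rel x y | [&& x \in S, y \in S & r x y]].
Definition nbhd r S x : {set V} := [set y in S | r x y].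
Definition deg r S x : nat := #|nbhd r S x|.
Definition leaves r S : {set V} := [set y in S | deg r S y == 1].

Definition tree_on r S : Prop :=
  [/\ symmetric r, irreflexive r, {in S &, forall x y, connect (induced r S) x y}
    & \sum_(x in S) deg r S x = (#|S|.-1).*2].

Lemma tree_on_small r S : symmetric r -> irreflexive r -> #|S| <= 1 -> tree_on r S.
Proof.
move=> r_sym r_irr /card_le1_eqP S1; split=> // [x y xS yS|].
  by rewrite (S1 x y xS yS) connect0.
case: (set_0Vmem S) => [->|[x xS]]; first by rewrite big_set0 cards0.
have -> : S = [set x] by apply/setP=> y; rewrite inE; apply/idP/eqP => [yS|->//]; exact: S1.
rewrite big_set1 cards1 /deg (_ : nbhd r _ x = set0) ?cards0 //.
by apply/setP=> y; rewrite !inE; apply/andP => -[/eqP-> ]; rewrite r_irr.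
Qed.

Lemma nbhd1_uniq r S y x : nbhd r S y = [set x] -> {in S, forall z, r y z -> z = x}.
Proof. by move=> Ny z zS yz; apply/set1P; rewrite -Ny inE zS. Qed.

Lemma degD1 r S l u : deg r S u = deg r (S :\ l) u + ((l \in S) && r u l).
Proof.
rewrite /deg (cardsD1 l (nbhd r S u)) addnC inE; congr (_ + _).
by apply: eq_card => y; rewrite !inE andbA.
Qed.

Lemma tree_on_deg_gt0 r S : tree_on r S -> 1 < #|S| -> {in S, forall x, 0 < deg r S x}.
Proof.
case=> _ _ S_conn _ S2 x xS.
have [w] : exists w, w \in S :\ x by apply/card_gt0P; rewrite (cardsD1 x S) xS in S2.
rewrite !inE => /andP[wx wS].
case/connectP: (S_conn x w xS wS) => -[_ /= wx0|y p /= /andP[/and3P[_ yS xy] _] _].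
  by rewrite wx0 eqxx in wx.
by apply/card_gt0P; exists y; rewrite inE yS.
Qed.

Lemma tree_on_leaf r S v : tree_on r S -> 1 < #|S| -> v \in S ->
  exists2 l, l \in S :\ v & deg r S l = 1.
Proof.
move=> tS S2 vS; have [_ _ _ deg_sum] := tS.
have deg_pos := tree_on_deg_gt0 tS S2.
suff /exists_inP[l lS /eqP] : [exists l in S :\ v, deg r S l == 1] by exists l.
apply/contraT => /exists_inPn no_leaf.
have : \sum_(x in S :\ v) 2 <= \sum_(x in S :\ v) deg r S x.
  apply: leq_sum => x xSv; have /setD1P[_ xS] := xSv.
  by have := deg_pos x xS; have := no_leaf x xSv; lia.
rewrite sum_nat_const -(leq_add2l (deg r S v)) -big_setD1 // deg_sum.
by have := deg_pos v vS; have := cardsD1 v S; rewrite vS; lia.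
Qed.

Lemma tree_on_setD1_leaf r S l : tree_on r S -> l \in leaves r S -> tree_on r (S :\ l).
Proof.
case=> r_sym r_irr S_conn deg_sum; rewrite inE => /andP[lS /cards1P[x Nl]].
have /setIdP[xS lx] : x \in nbhd r S l by rewrite Nl set11.
have xl : x != l by apply: contraTneq lx => ->; rewrite r_irr.
have l_nbr := nbhd1_uniq Nl.
split=> // [a b /setD1P[al aS] /setD1P[bl bS]|].
  pose h u := if u == l then x else u.
  have /connect_homo : forall u w, induced r S u w -> connect (induced r (S :\ l)) (h u) (h w).
    move=> u w /and3P[uS wS uw]; rewrite /h.
    have [ul|ul] := eqVneq u l; have [wl|wl] := eqVneq w l.
    - by rewrite connect0.
    - by rewrite ul in uw; rewrite (l_nbr w wS uw) connect0.
    - by rewrite wl r_sym in uw; rewrite (l_nbr u uS uw) connect0.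
    - by apply: connect1; rewrite /induced /= !inE ul wl uS wS uw.
  by move=> /(_ a b (S_conn a b aS bS)); rewrite /h (negbTE al) (negbTE bl).
have to_l : [set u in S :\ l | (l \in S) && r u l] = nbhd r S l.
  apply/setP=> u; rewrite /nbhd !inE lS /= [r u l]r_sym.
  by case: eqVneq => [->|]; rewrite ?r_irr ?andbF.
move: deg_sum; rewrite (big_setD1 l lS) /= (eq_bigr _ (fun u _ => degD1 r S l u)).
rewrite big_split /= sum_nat_bool to_l /deg Nl cards1.
have Sl_gt0 : 0 < #|S :\ l| by apply/card_gt0P; exists x; rewrite !inE xl.
by have := cardsD1 l S; rewrite lS; lia.
Qed.

Definition add_leaf r l z : rel V :=
  [rel a b | if a == l then b == z else if b == l then a == z else r a b].

Lemma add_leafE r l z a b : a != l -> b != l -> add_leaf r l z a b = r a b.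
Proof. by move=> al bl; rewrite /add_leaf /= (negbTE al) (negbTE bl). Qed.

Lemma tree_on_add_leaf r S l z :
  tree_on r S -> l \notin S -> z \in S -> tree_on (add_leaf r l z) (l |: S).
Proof.
case=> r_sym r_irr S_conn deg_sum lS zS.
have notl u : u \in S -> u != l by apply: contraTneq => ->.
have rl a b : a \in S -> b \in S -> add_leaf r l z a b = r a b.
  by move=> aS bS; rewrite add_leafE ?notl.
have zl := notl z zS.
have lz_edge : induced (add_leaf r l z) (l |: S) l z.
  by rewrite /induced /add_leaf /= !inE !eqxx zS orbT.
have zl_edge : induced (add_leaf r l z) (l |: S) z l.
  by rewrite /induced /add_leaf /= !inE (negbTE zl) !eqxx zS orbT.
have S_conn' : {in S &, forall a b, connect (induced (add_leaf r l z) (l |: S)) a b}.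
  move=> a b aS bS; apply: connect_sub (S_conn a b aS bS) => u w /and3P[uS wS uw].
  by apply: connect1; rewrite /induced /= !inE uS wS !orbT rl.
split.
- move=> a b; rewrite /add_leaf /=.
  case: (eqVneq a l) => [->|al]; case: (eqVneq b l) => [bl|bl];
    by rewrite ?bl ?eqxx ?[r a b]r_sym.
- move=> a; rewrite /add_leaf /=.
  by case: eqVneq => [->|_]; [rewrite eq_sym (negbTE zl) | exact: r_irr].
- move=> a b /setU1P[->|aS] /setU1P[->|bS].
  + exact: connect0.
  + exact: connect_trans (connect1 lz_edge) (S_conn' z b zS bS).
  + exact: connect_trans (S_conn' a z aS zS) (connect1 zl_edge).
  + exact: S_conn'.
have deg_l : deg (add_leaf r l z) (l |: S) l = 1.
  rewrite /deg (_ : nbhd _ _ _ = [set z]) ?cards1 //; apply/setP=> y.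
  by rewrite !inE /add_leaf /= eqxx; case: (eqVneq y z) => [->|]; rewrite ?zS ?orbT ?andbF.
have deg_S x : x \in S -> deg (add_leaf r l z) (l |: S) x = deg r S x + (x == z).
  move=> xS; rewrite (degD1 _ _ l) setU1K // setU11 /=.
  have -> : add_leaf r l z x l = (x == z) by rewrite /add_leaf /= (negbTE (notl x xS)) eqxx.
  congr (_ + _); apply: eq_card => y; rewrite !inE.
  by case: (boolP (y \in S)) => yS //; rewrite rl.
rewrite big_setU1 //= deg_l (eq_bigr _ deg_S) big_split /= deg_sum sum_nat_bool.
have -> : [set x in S | x == z] = [set z].
  by apply/setP=> y; rewrite !inE; case: eqVneq => [->|]; rewrite ?zS ?andbF.
rewrite cards1 cardsU1 lS.
have : 0 < #|S| by apply/card_gt0P; exists z.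
lia.
Qed.

(* Equivalent to acyclicity of [induced r S]. *)
Definition forest_on r S : Prop :=
  exists2 t, tree_on t S & {in S &, forall x y, r x y -> t x y}.

Lemma tree_on_forest_on r S : tree_on r S -> forest_on r S.
Proof. by exists r. Qed.

Lemma tree_on_forest_setD1 r S v : tree_on r S -> v \in S -> forest_on r (S :\ v).
Proof.
have [n] := ubnP #|S|; elim: n S => // n IH S Sn tS vS; have [r_sym r_irr _ _] := tS.
case: (leqP #|S| 1) => S1.
  exists r => //; apply: tree_on_small => //.
  exact: leq_trans (subset_leq_card (subD1set S v)) S1.
have [l /setD1P[lv lS] deg_l] := tree_on_leaf tS S1 vS.
have /cards1P[x Nl] := introT eqP deg_l.
have l_nbr := nbhd1_uniq Nl.
have lL : l \in leaves r S by rewrite inE lS deg_l.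
have Sn' : #|S :\ l| < n by rewrite (cardsD1 l S) lS in Sn.
have vSl : v \in S :\ l by rewrite !inE eq_sym lv.
have [t tSlv rt] := IH _ Sn' (tree_on_setD1_leaf tS lL) vSl.
have Sv : S :\ v = l |: (S :\ l :\ v).
  by apply/setP=> y; rewrite !inE; case: (eqVneq y l) => [->|]; rewrite ?lv ?lS ?andbT.
have lSlv : l \notin S :\ l :\ v by rewrite !inE eqxx andbF.
case: (set_0Vmem (S :\ l :\ v)) => [Slv0|[w wSlv]].
  exists r => //; apply: tree_on_small => //.
  by rewrite Sv Slv0 setU0 cards1.
have /setIdP[xS lx] : x \in nbhd r S l by rewrite Nl set11.
pose z := if x != v then x else w.
have zSlv : z \in S :\ l :\ v.
  rewrite /z; case: (eqVneq x v) => // xv.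
  by rewrite !inE xv xS andbT; apply: contraTneq lx => ->; rewrite r_irr.
exists (add_leaf t l z); first by rewrite Sv; apply: tree_on_add_leaf.
rewrite Sv => a b /setU1P[->|/setD1P[av /setD1P[al aS]]]
  /setU1P[->|/setD1P[bv /setD1P[bl bS]]] rab.
- by rewrite r_irr in rab.
- by rewrite /add_leaf /= eqxx /z (l_nbr b bS rab) -(l_nbr b bS rab) bv.
- rewrite r_sym in rab.
  by rewrite /add_leaf /= (negbTE al) eqxx /z (l_nbr a aS rab) -(l_nbr a aS rab) av.
- by rewrite add_leafE //; apply: rt; rewrite ?inE ?av ?al ?aS ?bv ?bl ?bS.
Qed.

Lemma forest_on_subset r S (A : {set V}) : forest_on r S -> A \subset S -> forest_on r A.
Proof.
have [n] := ubnP #|S :\: A|; elim: n S => // n IH S SAn [t tS rt] AS.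
case: (set_0Vmem (S :\: A)) => [SA0|[v /setDP[vS vA]]].
  have -> : A = S by apply/eqP; rewrite eqEsubset AS -setD_eq0 SA0 /=.
  by exists t.
have [t' tSv tt'] := tree_on_forest_setD1 tS vS.
apply: (IH (S :\ v)).
- rewrite (cardsD1 v (S :\: A)) !inE vS vA /= in SAn.
  have -> : S :\ v :\: A = S :\: A :\ v by apply/setP => y; rewrite !inE andbCA.
  by rewrite add1n ltnS in SAn.
- exists t' => // x y xSv ySv rxy; apply: tt' => //.
  by apply: rt => //; apply: (subsetP (subD1set S v)).
- by apply/subsetP => a aA; rewrite !inE (subsetP AS a aA) andbT; apply: contraNneq vA => <-.
Qed.

Lemma induced_sym r S : symmetric r -> symmetric (induced r S).
Proof. by move=> r_sym x y; rewrite /induced /= r_sym andbCA. Qed.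

Lemma leaf_nbr_not_leaf r S y x : tree_on r S -> 2 < #|S| -> y \in S ->
  nbhd r S y = [set x] -> deg r S x != 1.
Proof.
case=> r_sym r_irr S_conn _ S3 yS Ny.
have /setIdP[xS yx] : x \in nbhd r S y by rewrite Ny set11.
apply/negP => /cards1P[y' Nx]; have y'y : y' = y.
  by apply/esym/set1P; rewrite -Nx inE yS r_sym.
rewrite {}y'y in Nx.
have step u w : induced r S u w -> u \in [set x; y] -> w \in [set x; y].
  case/and3P=> _ wS uw /set2P[] eu; rewrite eu in uw; rewrite !inE.
  - by rewrite (nbhd1_uniq Nx wS uw) eqxx orbT.
  - by rewrite (nbhd1_uniq Ny wS uw) eqxx.
have closed_xy : closed (induced r S) [set x; y].
  by move=> u w uw; apply/idP/idP; apply: step; rewrite // induced_sym.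
have : S \subset [set x; y].
  apply/subsetP => z zS; rewrite -(closed_connect closed_xy (S_conn y z yS zS)).
  by rewrite !inE eqxx orbT.
by move/subset_leq_card; rewrite cards2; case: (_ != _); lia.
Qed.

Lemma tree_on_leaf_nbr_deg2 r S (nb : V -> V) : tree_on r S -> 2 < #|S| ->
  {in leaves r S, forall y, nbhd r S y = [set nb y]} -> {in leaves r S &, injective nb} ->
  exists2 y, y \in leaves r S & deg r S (nb y) = 2.
Proof.
move=> tS S3 Nnb nb_inj; have [_ _ _ deg_sum] := tS.
have deg_pos := tree_on_deg_gt0 tS (ltnW S3).
set L := leaves r S; set I := nb @: L.
have LS : L \subset S by apply/subsetP => y /setIdP[].
have nbS y : y \in L -> nb y \in S.
  by move/Nnb => Ny; have /setIdP[] : nb y \in nbhd r S y by rewrite Ny set11.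
have IS : I \subset S by apply/subsetP => _ /imsetP[y yL ->]; exact: nbS.
suff /exists_inP[y yL /eqP] : [exists y in L, deg r S (nb y) == 2] by exists y.
apply/contraT => /exists_inPn not2.
have bound u : u \in S -> 2 + (u \in I) <= deg r S u + (u \in L).
  move=> uS; have := deg_pos u uS; rewrite inE uS /=.
  case: (boolP (u \in I)) => [/imsetP[y yL ->]|_].
    have := leaf_nbr_not_leaf tS S3 (subsetP LS y yL) (Nnb y yL); have := not2 y yL.
    by case: eqP => //; case: eqP => //; lia.
  by case: eqP => //; lia.
have : \sum_(u in S) (2 + (u \in I)) <= \sum_(u in S) (deg r S u + (u \in L)).
  exact: leq_sum.
rewrite !big_split /= !sum_nat_bool sum_nat_const deg_sum.
rewrite (setIidPr IS : [set u in S | u \in I] = I) (setIidPr LS : [set u in S | u \in L] = L).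
by rewrite card_in_imset //; lia.
Qed.

Lemma tree_on_pendant_pair r S : tree_on r S -> 2 < #|S| ->
  exists a b c, [/\ uniq [:: a; b; c], {subset [:: a; b; c] <= S}
                   & {in S, forall y, r b y || r c y -> y \in [:: a; b; c]}].
Proof.
move=> tS S3; have [r_sym r_irr _ _] := tS.
pose nb y := odflt y [pick x in nbhd r S y].
have Nnb : {in leaves r S, forall y, nbhd r S y = [set nb y]}.
  move=> y /setIdP[_ /cards1P[x Nx]]; rewrite /nb Nx.
  by case: pickP => [x' /set1P -> | /(_ x)]; rewrite ?set11.
have nb_edge y : y \in leaves r S -> nb y \in S /\ r y (nb y).
  by move/Nnb => Ny; have /setIdP[] : nb y \in nbhd r S y by rewrite Ny set11.
have neq_edge u w : r u w -> u != w by apply: contraTneq => ->; rewrite r_irr.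
case: (boolP (dinjectiveb nb (leaves r S))) => [/dinjectiveP nb_inj|].
  have [y yL deg2] := tree_on_leaf_nbr_deg2 tS S3 Nnb nb_inj.
  have yS : y \in S by case/setIdP: yL.
  have [xS yx] := nb_edge y yL; set x := nb y in xS yx deg2 *.
  have yNx : y \in nbhd r S x by rewrite inE yS r_sym.
  have /cards1P[a Na] : #|nbhd r S x :\ y| == 1.
    by move: deg2; rewrite /deg (cardsD1 y) yNx; lia.
  have /setD1P[ay /setIdP[aS xa]] : a \in nbhd r S x :\ y by rewrite Na set11.
  exists a, x, y; split.
  - by rewrite /= !inE negb_or ay eq_sym neq_edge // eq_sym neq_edge.
  - by move=> z; rewrite !inE => /or3P[] /eqP->.
  - move=> z zS /orP[xz|yz]; rewrite !inE.
      case: (eqVneq z y) => [_|zy]; rewrite ?orbT //.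
      have /set1P-> : z \in [set a] by rewrite -Na !inE zy zS xz.
      by rewrite eqxx.
    by rewrite (nbhd1_uniq (Nnb y yL) zS yz) eqxx orbT.
case/dinjectivePn=> y1 y1L [y2 /andP[y21 y2L] nb12].
have [xS y1x] := nb_edge y1 y1L; have [_ y2x] := nb_edge y2 y2L.
rewrite -nb12 in y2x.
exists (nb y1), y1, y2; split.
- by rewrite /= !inE negb_or eq_sym neq_edge // (eq_sym (nb y1)) neq_edge // eq_sym y21.
- by move=> z; rewrite !inE => /or3P[] /eqP->; rewrite // ?(setIdP y1L).1 ?(setIdP y2L).1.
- move=> z zS /orP[] e; rewrite !inE.
  + by rewrite (nbhd1_uniq (Nnb y1 y1L) zS e) eqxx.
  + by rewrite (nbhd1_uniq (Nnb y2 y2L) zS e) -nb12 eqxx.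
Qed.

End TreesOnSubsets.

Lemma tree_on_relpre (V W : finType) (f : W -> V) (r : rel V) (A : {set W}) :
  injective f -> tree_on r (f @: A) -> tree_on (relpre f r) A.
Proof.
move=> f_inj [r_sym r_irr fA_conn deg_sum].
have deg_f a : deg (relpre f r) A a = deg r (f @: A) (f a).
  rewrite /deg -(card_imset _ f_inj); apply: eq_card => x.
  apply/imsetP/setIdP => [[b /setIdP[bA ab] ->]|[/imsetP[b bA ->] ab]].
    by rewrite imset_f.
  by exists b; rewrite // inE bA.
split=> [a b|a|a b aA bA|]; rewrite /= ?r_irr //.
- pose g x := odflt a [pick w | f w == x].
  have fK : cancel f g.
    by move=> w; rewrite /g; case: pickP => [w' /eqP/f_inj -> | /(_ w)]; rewrite ?eqxx.
  rewrite -(fK a) -(fK b); apply: connect_homo (fA_conn _ _ (imset_f f aA) (imset_f f bA)).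
  move=> _ _ /and3P[/imsetP[u uA ->] /imsetP[w wA ->] uw].
  by apply: connect1; rewrite /induced /= !fK uA wA.
- by move: deg_sum; rewrite big_imset ?card_imset //= => [<-|]; [apply: eq_bigr | exact: in2W].
Qed.

Lemma tree_on_enum (V : finType) (r : rel V) (S : {set V}) :
  tree_on r S -> tree_on (relpre (enum_val (A := S)) r) setT.
Proof.
move=> tS; apply: tree_on_relpre; first exact: enum_val_inj.
suff -> : [set enum_val i | i in [set: 'I_#|S|]] = S by [].
apply/setP=> x; apply/imsetP/idP => [[i _ ->]|xS]; first exact: enum_valP.
by exists (enum_rank_in xS x); rewrite ?in_setT ?enum_rankK_in.
Qed.

Lemma n_edges_handshake n (e : rel 'I_n) : symmetric e -> irreflexive e ->
  \sum_(i in [set: 'I_n]) deg e setT i = (n_edges e).*2.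
Proof.
move=> e_sym e_irr; set P := [set p : 'I_n * 'I_n | e p.1 p.2].
have -> : \sum_(i in [set: 'I_n]) deg e setT i = #|P|.
  rewrite -sum1dep_card -(pair_big_dep xpredT (fun i j => e i j) (fun _ _ => 1)) /=.
  apply: eq_big => [i|i _]; rewrite ?in_setT // sum1dep_card.
  by apply: eq_card => j; rewrite !inE.
pose swap (p : 'I_n * 'I_n) := (p.2, p.1).
have swap_inj : injective swap by case=> [a b] [c d] [-> ->].
set B := [set p : 'I_n * 'I_n | val p.1 < val p.2].
rewrite -(cardsID B P) -addnn; congr (_ + _).
  by apply: eq_card => p; rewrite !inE.
rewrite /n_edges -(card_preimset _ swap_inj); apply: eq_card => -[a b].
rewrite !inE /= e_sym -leqNgt andbC.
by case: ltngtP => // /ord_inj ->; rewrite e_irr.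
Qed.

Lemma is_tree_on n (T : rel 'I_n) : is_tree T <-> tree_on T [set: 'I_n].
Proof.
have inducedT : induced T setT =2 T by move=> x y; rewrite /induced /= !in_setT.
split=> [[[T_irr T_sym] [T_conn T_edges]]|[T_sym T_irr T_conn T_deg]].
  split=> // [x y _ _|]; first by rewrite (eq_connect inducedT).
  by rewrite n_edges_handshake // T_edges cardsT card_ord.
split=> //; split=> [x y|]; first by rewrite -(eq_connect inducedT) T_conn ?in_setT.
by apply: double_inj; rewrite -n_edges_handshake // T_deg cardsT card_ord.
Qed.

Lemma pairwise_nth_sym (T : Type) (r : rel T) x0 xs i j :
  symmetric r -> pairwise r xs -> i < size xs -> j < size xs -> i != j ->
  r (nth x0 xs i) (nth x0 xs j).
Proof.
move=> r_sym /(pairwiseP x0) xs_r ilt jlt; rewrite neq_ltn => /orP[ij|ji]; first exact: xs_r.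
by rewrite r_sym; apply: xs_r.
Qed.

Lemma prime_coprime_lt p k : prime p -> 0 < k < p -> coprime p k.
Proof.
move=> p_pr /andP[k_gt0 kp]; rewrite prime_coprime //.
by apply: contraTN kp => /(dvdn_leq k_gt0); lia.
Qed.

Lemma subgraph_embeds_SP_labelling N (T : rel 'I_N) (lab : 'I_N -> nat) :
  irreflexive T -> injective lab -> (forall x, 0 < lab x <= N) ->
  (forall x y, T x y -> coprime (lab x) (lab y)) -> subgraph_embeds T (SP N).
Proof.
move=> T_irr lab_inj lab_bnd lab_cop.
pose f x : 'I_N := insubd x (lab x).-1.
have f_lab x : (f x).+1 = lab x.
  by rewrite val_insubd; have := lab_bnd x; case: ifP => /=; lia.
have f_inj : injective f by move=> x y /(congr1 (fun i => (val i).+1)); rewrite !f_lab => /lab_inj.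
exists f; split=> // x y Txy; rewrite /SP (inj_eq f_inj) !f_lab lab_cop // andbT.
by apply: contraTneq Txy => ->; rewrite T_irr.
Qed.

Lemma SP_forest_labelling (V : finType) (r : rel V) (O : {set V}) :
  tree_complete (SP #|O|) -> forest_on r O ->
  exists lab : V -> nat, [/\ {in O &, injective lab}, {in O, forall x, 0 < lab x <= #|O|}
                         & {in O &, forall x y, r x y -> coprime (lab x) (lab y)}].
Proof.
move=> tc [t tO rt]; case: (set_0Vmem O) => [O0|[x0 x0O]].
  by exists (fun=> 0); split=> x; rewrite O0 inE.
have [g [g_inj g_edge]] := tc _ ((is_tree_on _).2 (tree_on_enum tO)).
pose rk := enum_rank_in x0O.
exists (fun x => (g (rk x)).+1); split=> [x y xO yO /succn_inj/ord_inj/g_inj|x _|x y xO yO rxy].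
- by move/(congr1 enum_val); rewrite !enum_rankK_in.
- exact: ltn_ord.
- have : t (enum_val (rk x)) (enum_val (rk y)) by rewrite !enum_rankK_in //; apply: rt.
  by move/g_edge/andP=> [].
Qed.

Definition pendant_seq n (T : rel 'I_n) (s : seq 'I_n) : Prop :=
  uniq s /\ {in s, forall x y, y \notin s -> T x y -> index x s = 0}.

Lemma subgraph_embeds_SP_pendant N m (T : rel 'I_N) (s : seq 'I_N) :
  is_tree T -> tree_complete (SP m) -> prime m.+1 -> N = m + size s ->
  pendant_seq T s -> pairwise coprime (iota m.+1 (size s)) -> subgraph_embeds T (SP N).
Proof.
move=> /is_tree_on tT tc m_pr eN [s_uniq s_pend] s_cop; have [T_sym T_irr _ _] := tT.
set O := ~: [set x in s].
have inO x : (x \in O) = (x \notin s) by rewrite !inE.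
have O_card : #|O| = m.
  have := cardsC [set x in s]; rewrite cardsE (card_uniqP s_uniq) card_ord => O_compl.
  by apply/(@addnI (size s)); rewrite O_compl addnC -eN.
have O_forest := forest_on_subset (tree_on_forest_on tT) (subsetT O).
rewrite -O_card in tc; have [lab0 [lab0_inj lab0_bnd lab0_cop]] := SP_forest_labelling tc O_forest.
pose lab x := if x \in s then m.+1 + index x s else lab0 x.
have s_lab x : x \in s -> lab x = m.+1 + index x s /\ index x s < size s.
  by move=> xs; rewrite /lab xs index_mem.
have O_lab x : x \notin s -> lab x = lab0 x /\ 0 < lab0 x <= m.
  by move=> xs; rewrite /lab (negbTE xs) -O_card lab0_bnd ?inO.
have cross x y : x \in s -> y \notin s -> T x y -> coprime (lab x) (lab y).
  move=> xs ys Txy; have [-> _] := s_lab x xs; have [-> ?] := O_lab y ys.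
  by rewrite (s_pend x xs y) // addn0; apply: prime_coprime_lt.
apply: (subgraph_embeds_SP_labelling (lab := lab)) => // [x y|x|x y Txy].
- case: (boolP (x \in s)) => xs; case: (boolP (y \in s)) => ys.
  + have [-> _] := s_lab x xs; have [-> _] := s_lab y ys.
    by move/addnI => ixy; rewrite -(nth_index x xs) ixy nth_index.
  + by have [-> _] := s_lab x xs; have [-> ?] := O_lab y ys; lia.
  + by have [-> ?] := O_lab x xs; have [-> _] := s_lab y ys; lia.
  + by have [-> _] := O_lab x xs; have [-> _] := O_lab y ys; apply: lab0_inj; rewrite inO.
- case: (boolP (x \in s)) => xs; last by have [-> ?] := O_lab x xs; lia.
  by have [-> ?] := s_lab x xs; lia.
case: (boolP (x \in s)) => xs; case: (boolP (y \in s)) => ys.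
- have ixy : index x s != index y s.
    by apply: contraTneq Txy => /(congr1 (nth x s)); rewrite !nth_index // => ->; rewrite T_irr.
  have [-> ix] := s_lab x xs; have [-> iy] := s_lab y ys.
  have := pairwise_nth_sym 0 (i := index x s) (j := index y s) coprime_sym s_cop.
  by rewrite size_iota !nth_iota //; apply.
- exact: cross.
- by rewrite coprime_sym; apply: cross; rewrite // T_sym.
- have [-> _] := O_lab x xs; have [-> _] := O_lab y ys.
  by apply: lab0_cop; rewrite ?inO.
Qed.

Lemma coprime_odd_add2 k : odd k -> coprime k k.+2.
Proof. by rewrite /coprime -addn2 gcdnDl -/(coprime k 2) coprimen2. Qed.

Lemma tree_complete_SP_add1 m : tree_complete (SP m) -> prime m.+1 -> tree_complete (SP m.+1).
Proof.
move=> tc m_pr T tT; apply: (subgraph_embeds_SP_pendant (s := [:: ord0]) tT tc m_pr) => //.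
- by rewrite addn1.
- by split=> // x /[!inE] /eqP->.
Qed.

Lemma tree_complete_SP_add2 m : tree_complete (SP m) -> prime m.+1 -> tree_complete (SP m.+2).
Proof.
move=> tc m_pr T tT; have tT' := (is_tree_on T).1 tT; have [_ T_irr _ _] := tT'.
have two : 1 < #|[set: 'I_m.+2]| by rewrite cardsT card_ord.
have [l _ /eqP/cards1P[x Nl]] := tree_on_leaf tT' two (in_setT ord0).
have /setIdP[_ lx] : x \in nbhd T setT l by rewrite Nl set11.
apply: (subgraph_embeds_SP_pendant (s := [:: x; l]) tT tc m_pr); last by rewrite /= coprimenS.
  by rewrite addn2.
split=> [|z]; first by rewrite /= inE andbT; apply: contraTneq lx => ->; rewrite T_irr.
rewrite !inE => /orP[] /eqP-> y y_out; first by rewrite /= eqxx.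
by move/(nbhd1_uniq Nl (in_setT y)) => yx; rewrite yx !inE eqxx in y_out.
Qed.

Lemma tree_complete_SP_add3 m :
  tree_complete (SP m) -> prime m.+1 -> 1 < m -> tree_complete (SP m.+3).
Proof.
move=> tc m_pr m_gt1 T tT; have tT' := (is_tree_on T).1 tT.
have three : 2 < #|[set: 'I_m.+3]| by rewrite cardsT card_ord.
have [a [b [c [abc_uniq _ bc_nbr]]]] := tree_on_pendant_pair tT' three.
have m1_odd : odd m.+1 by case: (even_prime m_pr) => // -[m1]; rewrite m1 in m_gt1.
apply: (subgraph_embeds_SP_pendant (s := [:: a; b; c]) tT tc m_pr).
- by rewrite addn3.
- split=> // z z_in y y_out Tzy; move: z_in; rewrite !inE => /or3P[] /eqP ez.
  + by rewrite ez /= eqxx.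
  + by move: y_out; rewrite bc_nbr ?in_setT // -ez Tzy.
  + by move: y_out; rewrite bc_nbr ?in_setT // -ez Tzy orbT.
- by rewrite /= !coprimenS coprime_odd_add2.
Qed.

Theorem corollary9p6 (n : nat) :
  1 <= n -> tree_complete (SP n) -> prime n.+1 ->
  (tree_complete (SP (n + 1)) /\ tree_complete (SP (n + 2))) /\
  (prime (n + 3) ->
     [/\ tree_complete (SP (n + 1)), tree_complete (SP (n + 2)),
         tree_complete (SP (n + 3)), tree_complete (SP (n + 4))
       & tree_complete (SP (n + 5))]).
Proof.
(* [1 <= n] also follows from [prime n.+1]. *)
move=> _ tc n_pr; rewrite addn1 addn2 addn3 addn4 -addSnnS addn4.
have tc1 := tree_complete_SP_add1 tc n_pr; have tc2 := tree_complete_SP_add2 tc n_pr.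
split=> // n3_pr; split=> //.
- exact: tree_complete_SP_add1 tc2 n3_pr.
- exact: tree_complete_SP_add2 tc2 n3_pr.
- exact: tree_complete_SP_add3 tc2 n3_pr _.
Qed.
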